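(* Let $p$ be an odd prime. Then the edge set of the complete graph $K_{p^4}$ can be partitioned into $(p^4-1)/4$ subgraphs, each isomorphic to $C_{p^2} \square C_{p^2}$.
   Context: $C_n$ denotes the cycle graph on $n$ vertices and $K_m$ the complete graph on $m$ vertices. For graphs $G=(V,E)$ and $G'=(V',E')$, the Cartesian product $G \square G'$ has vertex set $V\times V'$, with $\{(v,v'),(w,w')\}$ an edge iff either $\{v,w\}\in E$ and $v'=w'$, or $v=w$ and $\{v',w'\}\in E'$. Partitioning $K_m$ into copies of $G$ means decomposing its edge set into edge-disjoint subgraphs (on the vertex set of $K_m$) each isomorphic to $G$. *)

From mathcomp Require Import all_boot.
Set Implicit Arguments. Unset Strict Implicit. Unset Printing Implicit Defensive.

Definition cycle_adj (n : nat) : rel 'I_n :=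
  fun i j => (val j == (val i).+1 %% n) || (val i == (val j).+1 %% n).

Definition cart_adj (V V' : finType) (e : rel V) (e' : rel V') : rel (V * V') :=
  fun x y => (e x.1 y.1 && (x.2 == y.2)) || ((x.1 == y.1) && e' x.2 y.2).

Definition Kedges (m : nat) : {set {set 'I_m}} := [set E : {set 'I_m} | #|E| == 2].

Definition image_edges (V : finType) (e : rel V) (m : nat) (f : V -> 'I_m)
  : {set {set 'I_m}} := [set [set f xy.1; f xy.2] | xy in [set xy : V * V | e xy.1 xy.2]].

Definition iso_copy (V : finType) (e : rel V) (m : nat) (E : {set {set 'I_m}}) :=
  exists f : V -> 'I_m, injective f /\ E = image_edges e f.

Definition decomposes_into (m k : nat) (V : finType) (e : rel V) :=
  exists E : 'I_k -> {set {set 'I_m}},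
    [/\ forall i, iso_copy e (E i),
        forall i j, i != j -> [disjoint E i & E j]
      & \bigcup_(i < k) E i = Kedges m].
Arguments cycle_adj n : clear implicits.
Arguments Kedges m : clear implicits.

(* Identify the vertices of K_(p^4) with the field F = GF(p^4) and let w generate F^*.
   Every nonzero element of F is +-w^n with n < (p^4 - 1)/2, and these exponents are
   grouped into quadruples of "directions" x, y = x g, u = x w, v = x g w, where
   g = w^(p^2 + 1) lies in GF(p^2) \ GF(p) and w lies outside GF(p^2); hence x, y, u, v
   are linearly independent over GF(p).  The walk that repeats p - 1 steps along x and
   one step along y closes up after exactly p^2 steps, because p ((p - 1) x + y) = 0,
   so the sum of such a walk along (x, y) and one along (u, v) maps the torus
   C_(p^2) x C_(p^2) bijectively onto F.  Exchanging the roles of x and y (and of u and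
   v) gives a second torus on the same vertices which, at every vertex and along each
   axis, steps in the other of the two available directions; the two tori thus share
   out the edges with differences +-x, +-y, +-u, +-v, and the (p^4 - 1)/4 tori
   obtained this way partition the edges of K_(p^4). *)

From mathcomp Require Import all_boot all_algebra finfield cyclic.
From mathcomp Require Import ring zify.
Set Implicit Arguments. Unset Strict Implicit. Unset Printing Implicit Defensive.
Import GRing.Theory.

Section PrimeSubfield.
Local Open Scope ring_scope.
Variables (F : idomainType) (p : nat).
Hypothesis pchF : p \in [pchar F].

Definition frob_fixed (x : F) := x ^+ p == x.

Definition Fp_independent (x y u v : F) :=
  forall a b c d, frob_fixed a -> frob_fixed b -> frob_fixed c -> frob_fixed d ->
  a * x + b * y + c * u + d * v = 0 -> [/\ a = 0, b = 0, c = 0 & d = 0].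

Lemma exprD_pchar_expn (x y : F) k : (x + y) ^+ (p ^ k) = x ^+ (p ^ k) + y ^+ (p ^ k).
Proof.
apply: exprDn_pchar; rewrite pnatX (eq_pnat _ (pcharf_eq pchF)).
by rewrite pnat_id ?(pcharf_prime pchF).
Qed.

Lemma frob_fixed_nat n : frob_fixed n%:R.
Proof. by rewrite /frob_fixed -(pFrobenius_autE pchF) pFrobenius_aut_nat. Qed.

Lemma frob_fixed_sub x y : frob_fixed x -> frob_fixed y -> frob_fixed (x - y).
Proof.
move=> /eqP x_p /eqP y_p.
by rewrite /frob_fixed -(pFrobenius_autE pchF) rmorphB /= !pFrobenius_autE x_p y_p.
Qed.

Lemma frob_fixed_expp2 x : frob_fixed x -> x ^+ (p ^ 2) = x.
Proof. by move=> /eqP x_p; rewrite (expnS p 1) expn1 exprM x_p x_p. Qed.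

Lemma eqr_nat_pchar m n : (m%:R == n%:R :> F) = (m == n %[mod p])%N.
Proof.
wlog le_nm : m n / (n <= m)%N => [wlog_mn|].
  by case: (leqP n m) => [|/ltnW] /wlog_mn //; rewrite eq_sym [in RHS]eq_sym.
by rewrite eqn_mod_dvd // (dvdn_pcharf pchF) natrB // subr_eq0.
Qed.

Lemma frob_fixed_indep2 (g x y : F) : g ^+ p != g ->
  frob_fixed x -> frob_fixed y -> x + y * g = 0 -> x = 0 /\ y = 0.
Proof.
move=> g_p /eqP x_p /eqP y_p xyg0.
have xyg_p0 : x + y * g ^+ p = 0.
  by rewrite -x_p -y_p -exprMn -(pFrobenius_autE pchF) -rmorphD /= xyg0 rmorph0.
have /eqP : y * (g ^+ p - g) = 0.
  have -> : y * (g ^+ p - g) = (x + y * g ^+ p) - (x + y * g) by ring.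
  by rewrite xyg_p0 xyg0 subrr.
rewrite mulf_eq0 subr_eq0 (negbTE g_p) orbF => /eqP y0.
by move: xyg0; rewrite y0 mul0r addr0.
Qed.

Lemma Fp_independent_1_g_t_gt (g t : F) :
  g ^+ (p ^ 2) = g -> g ^+ p != g -> t ^+ (p ^ 2) != t -> Fp_independent 1 g t (g * t).
Proof.
move=> g_p2 g_p t_p2 a b c d fa fb fc fd.
have -> : a * 1 + b * g + c * t + d * (g * t) = a + b * g + (c + d * g) * t by ring.
move=> eq0.
have Fp2_fixed x y : frob_fixed x -> frob_fixed y -> (x + y * g) ^+ (p ^ 2) = x + y * g.
  by move=> fx fy; rewrite exprD_pchar_expn exprMn g_p2 !frob_fixed_expp2.
have eq0_p2 : a + b * g + (c + d * g) * t ^+ (p ^ 2) = 0.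
  rewrite -[a + b * g]Fp2_fixed // -[c + d * g]Fp2_fixed // -exprMn.
  by rewrite -exprD_pchar_expn eq0 expr0n expn_eq0 gtn_eqF ?(prime_gt0 (pcharf_prime pchF)).
have /eqP : (c + d * g) * (t ^+ (p ^ 2) - t) = 0.
  have -> : (c + d * g) * (t ^+ (p ^ 2) - t)
           = (a + b * g + (c + d * g) * t ^+ (p ^ 2)) - (a + b * g + (c + d * g) * t) by ring.
  by rewrite eq0_p2 eq0 subrr.
rewrite mulf_eq0 subr_eq0 (negbTE t_p2) orbF => /eqP cdg0.
move: eq0; rewrite cdg0 mul0r addr0 => abg0.
by have [-> ->] := frob_fixed_indep2 g_p fa fb abg0; have [-> ->] := frob_fixed_indep2 g_p fc fd cdg0.
Qed.

Lemma Fp_independentZ e x y u v : e != 0 ->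
  Fp_independent x y u v -> Fp_independent (e * x) (e * y) (e * u) (e * v).
Proof.
move=> e_neq0 indep a b c d fa fb fc fd eq0; apply: indep => //.
by apply: (mulfI e_neq0); rewrite mulr0 -eq0; ring.
Qed.

Lemma Fp_independent_swap x y u v : Fp_independent x y u v -> Fp_independent y x v u.
Proof.
move=> indep a b c d fa fb fc fd eq0.
have [|-> -> -> ->] // := indep b a d c fb fa fd fc.
by rewrite -eq0; ring.
Qed.

End PrimeSubfield.

Section FiniteField.
Local Open Scope ring_scope.
Variable F : finFieldType.

Lemma expf_card_pred (x : F) : x != 0 -> x ^+ #|F|.-1 = 1.
Proof.
move=> x_neq0; apply: (mulIf x_neq0); rewrite mul1r -exprSr.
by rewrite (ltn_predK (finNzRing_gt1 F)) expf_card.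
Qed.

Lemma finField_prim_root : exists w : F, #|F|.-1.-primitive_root w.
Proof.
have : has #|F|.-1.-primitive_root (enum (predC1 (0 : F))).
  apply: has_prim_root; last by rewrite -cardE cardC1.
  - by rewrite -subn1 subn_gt0 finNzRing_gt1.
  - by apply/allP => x; rewrite mem_enum inE => /expf_card_pred x1; rewrite unity_rootE x1.
  - exact: enum_uniq.
by case/hasP=> w _; exists w.
Qed.

End FiniteField.

Section Digits.
Variable p : nat.
Hypothesis p_gt0 : 0 < p.

(* For i = q p + r this is ((r - q) mod p) p + r; [i - i %/ p] avoids truncated
   subtraction and has the same residue as r - q. *)
Definition digit_swap (i : nat) : nat := (i - i %/ p) %% p * p + i %% p.

Lemma digit_swap_lt i : digit_swap i < p ^ 2.
Proof.
rewrite /digit_swap (expnS p 1) expn1.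
by have := ltn_pmod (i - i %/ p) p_gt0; have := ltn_pmod i p_gt0; nia.
Qed.

Lemma digit_swap_mod i : digit_swap i = i %[mod p].
Proof. by rewrite /digit_swap modnMDl modn_mod. Qed.

Definition carry (i : nat) : bool := p %| i.+1.

Lemma carry_digit_swap i : carry (digit_swap i) = carry i.
Proof. by rewrite /carry /dvdn -addn1 -modnDml digit_swap_mod modnDml addn1. Qed.

End Digits.

Section CarryWalk.
Local Open Scope ring_scope.
Variables (F : idomainType) (p : nat).
Hypothesis pchF : p \in [pchar F].

Let p_gt0 : (0 < p)%N := prime_gt0 (pcharf_prime pchF).

(* The point reached after i steps of the walk that repeats p - 1 steps x and then
   one step y: i %/ p of the steps are y-steps. *)
Definition carry_walk (x y : F) (i : nat) : F := (i %/ p)%:R * (y - x) + i%:R * x.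

Lemma carry_walkS x y i :
  carry_walk x y i.+1 = carry_walk x y i + (if carry p i then y else x).
Proof.
rewrite /carry_walk /carry divnS //; case: ifP => [|_]; rewrite /= ?add0n mulrSr; last by ring.
by rewrite (dvdn_pcharf pchF) mulrSr addr_eq0 => /eqP ->; ring.
Qed.

Lemma carry_walk_mod x y i : carry_walk x y (i %% p ^ 2) = carry_walk x y i.
Proof.
have p_dvd_p2 : (p %| p ^ 2)%N by rewrite dvdn_exp.
have div_p : (i %/ p = i %/ p ^ 2 * p + i %% p ^ 2 %/ p)%N.
  by rewrite {1}(divn_eq i (p ^ 2)) (expnS p 1) expn1 mulnA divnMDl.
rewrite /carry_walk div_p -(GRing.natr_mod_pchar pchF (_ %% _)) modn_dvdm //.
by rewrite GRing.natr_mod_pchar // natrD natrM (pcharf0 pchF) mulr0 add0r.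
Qed.

Lemma carry_walk_swap x y i : carry_walk y x (digit_swap p i) = carry_walk x y i.
Proof.
rewrite /carry_walk -(GRing.natr_mod_pchar pchF (digit_swap p i)) digit_swap_mod.
rewrite !GRing.natr_mod_pchar // /digit_swap divnMDl // (divn_small (ltn_pmod i p_gt0)).
by rewrite addn0 GRing.natr_mod_pchar // natrB ?leq_div //; ring.
Qed.

Lemma natr_digits_inj i i' : (i < p ^ 2)%N -> (i' < p ^ 2)%N ->
  (i %/ p)%:R = (i' %/ p)%:R :> F -> i%:R = i'%:R :> F -> i = i'.
Proof.
have digit_lt k : (k < p ^ 2)%N -> (k %/ p < p)%N.
  by move=> lt_k; rewrite ltn_divLR // -(expnS p 1) expn1.
move=> lt_i lt_i' /eqP + /eqP; rewrite !(eqr_nat_pchar pchF) => /eqP + /eqP.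
rewrite (modn_small (digit_lt _ lt_i)) (modn_small (digit_lt _ lt_i')) => eq_div eq_mod.
by rewrite (divn_eq i p) (divn_eq i' p) eq_div eq_mod.
Qed.

Definition torus_walk (x y u v : F) (i j : nat) : F := carry_walk x y i + carry_walk u v j.

Lemma torus_walk_inj x y u v i j i' j' : Fp_independent p x y u v ->
  (i < p ^ 2)%N -> (j < p ^ 2)%N -> (i' < p ^ 2)%N -> (j' < p ^ 2)%N ->
  torus_walk x y u v i j = torus_walk x y u v i' j' -> i = i' /\ j = j'.
Proof.
move=> indep lt_i lt_j lt_i' lt_j' eq_walk.
pose dsteps k k' : F := (k%:R - (k %/ p)%:R) - (k'%:R - (k' %/ p)%:R).
pose dcarries k k' : F := (k %/ p)%:R - (k' %/ p)%:R.
have fixed_dsteps k k' : frob_fixed p (dsteps k k').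
  by do !apply: (frob_fixed_sub pchF); apply: (frob_fixed_nat pchF).
have fixed_dcarries k k' : frob_fixed p (dcarries k k').
  by do !apply: (frob_fixed_sub pchF); apply: (frob_fixed_nat pchF).
have eq0 : dsteps i i' * x + dcarries i i' * y + dsteps j j' * u + dcarries j j' * v = 0.
  rewrite -[0](subrr (torus_walk x y u v i j)) {2}eq_walk /torus_walk /carry_walk.
  by rewrite /dsteps /dcarries; ring.
have [dsteps_i dcarries_i dsteps_j dcarries_j] := indep _ _ _ _ (fixed_dsteps i i')
  (fixed_dcarries i i') (fixed_dsteps j j') (fixed_dcarries j j') eq0.
have digits_eq k k' : dsteps k k' = 0 -> dcarries k k' = 0 ->
    (k %/ p)%:R = (k' %/ p)%:R :> F /\ k%:R = k'%:R :> F.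
  move=> dsteps0 /eqP; rewrite subr_eq0 => /eqP eq_carries; split=> //.
  by apply/eqP; rewrite -subr_eq0 -dsteps0 /dsteps eq_carries; apply/eqP; ring.
have [div_i mod_i] := digits_eq _ _ dsteps_i dcarries_i.
have [div_j mod_j] := digits_eq _ _ dsteps_j dcarries_j.
by split; apply: natr_digits_inj.
Qed.

End CarryWalk.

Lemma set2_eq (T : finType) (a b a' b' : T) : a != b ->
  [set a; b] = [set a'; b'] -> (a = a' /\ b = b') \/ (a = b' /\ b = a').
Proof.
move=> ne_ab eq_ab; have := set21 a b; have := set22 a b; rewrite eq_ab.
by case/set2P=> eq_b /set2P [] eq_a; rewrite eq_a eq_b ?eqxx in ne_ab *; [| right | left |].
Qed.

Section Construction.
Variable p : nat.
Hypotheses (p_prime : prime p) (p_odd : odd p).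

Let m := p./2 * (p./2).+1.
Let h := (2 * m).+1.

Lemma p_ge3 : 3 <= p.
Proof. by have := prime_gt1 p_prime; case: p p_odd => [|[|[|]]]. Qed.

Lemma m_gt0 : 0 < m.
Proof. by rewrite /m muln_gt0 half_gt0 (leq_trans _ p_ge3). Qed.

Lemma p2_gt0 : 0 < p ^ 2.
Proof. by rewrite expn_gt0 prime_gt0. Qed.

Lemma sqr_p : p ^ 2 = 4 * m + 1.
Proof. by rewrite /m -{1 2}(odd_double_half p) p_odd -muln2; nia. Qed.

Lemma sqr_p_succ : (p ^ 2).+1 = 2 * h.
Proof. by rewrite sqr_p /h; lia. Qed.

Lemma p4_sub1 : p ^ 4 - 1 = 8 * m * h.
Proof. by rewrite (_ : 4 = 2 + 2) // expnD sqr_p /h; nia. Qed.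

(* Since w ^+ (4 * m * h) = -1, every nonzero element of F is +-w ^+ n for a unique
   n < 4 * m * h.  In base p ^ 2 + 1 = 2 * h the two digits of n are 2 * q + b < 2 * m
   and 2 * r + d < 2 * h; the index k = q * h + r < m * h labels the pair of copies
   sharing the four directions w ^+ dexp k _ _. *)
Definition dexp (k : nat) (b d : bool) : nat :=
  (2 * (k %/ h) + b) * (p ^ 2).+1 + (2 * (k %% h) + d).

Lemma dexp_lt k b d : k < m * h -> dexp k b d < 4 * m * h.
Proof.
move=> lt_k; have lt_q : k %/ h < m by rewrite ltn_divLR.
have := ltn_pmod k (ltn0Sn (2 * m)); rewrite /dexp sqr_p_succ -/h.
by case: b; case: d => /=; nia.
Qed.

Lemma dexp_inj k k' b b' d d' : dexp k b d = dexp k' b' d' -> [/\ k = k', b = b' & d = d'].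
Proof.
have h_gt0 : 0 < h by [].
have s_gt0 : 0 < (p ^ 2).+1 by [].
have rem_lt j (c : bool) : 2 * (j %% h) + c < (p ^ 2).+1.
  by have := ltn_pmod j h_gt0; rewrite sqr_p_succ; case: c => /=; lia.
move=> eq_dexp.
have := congr1 (divn^~ (p ^ 2).+1) eq_dexp; have := congr1 (modn^~ (p ^ 2).+1) eq_dexp.
rewrite /dexp !modnMDl !divnMDl // !(modn_small (rem_lt _ _)) !(divn_small (rem_lt _ _)) !addn0.
move=> eq_rem eq_quo {eq_dexp}.
have [eq_b eq_q] : b = b' /\ k %/ h = k' %/ h by case: b b' eq_quo => [] [] /=; lia.
have [eq_d eq_r] : d = d' /\ k %% h = k' %% h by case: d d' eq_rem => [] [] /=; lia.
by split=> //; rewrite (divn_eq k h) (divn_eq k' h) eq_q eq_r.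
Qed.

Lemma dexp_onto n : n < 4 * m * h -> exists k b d, k < m * h /\ n = dexp k b d.
Proof.
move=> lt_n; have s_gt0 : 0 < (p ^ 2).+1 by [].
set a := n %/ (p ^ 2).+1; set c := n %% (p ^ 2).+1.
have lt_a : a < 2 * m by rewrite ltn_divLR // sqr_p_succ; nia.
have lt_c : c < 2 * h by rewrite -sqr_p_succ ltn_pmod.
have lt_c2 : c./2 < h by rewrite -(odd_double_half c) -muln2 in lt_c; case: (odd c) lt_c => /=; lia.
exists (a./2 * h + c./2), (odd a), (odd c); split.
  by rewrite -(odd_double_half a) -muln2 in lt_a; case: (odd a) lt_a => /=; nia.
rewrite /dexp divnMDl // divn_small // addn0 modnMDl modn_small //.
by rewrite !(addnC (2 * _)) !(mulnC 2) !muln2 !odd_double_half {1}(divn_eq n (p ^ 2).+1).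
Qed.

Section Field.
Local Open Scope ring_scope.
Variables (F : finFieldType) (w : F).
Hypotheses (pchF : p \in [pchar F]) (cardF : #|F| = (p ^ 4)%N).
Hypothesis w_prim : #|F|.-1.-primitive_root w.

Lemma card_units : (#|F|.-1 = 8 * m * h)%N.
Proof. by rewrite cardF -subn1 p4_sub1. Qed.

Lemma w_expr_inj a b : (a < 8 * m * h)%N -> (b < 8 * m * h)%N -> w ^+ a = w ^+ b -> a = b.
Proof.
by move=> lt_a lt_b /eqP; rewrite (eq_prim_root_expr w_prim) card_units !modn_small // => /eqP.
Qed.

Lemma w_neq0 : w != 0.
Proof. by rewrite (prim_root_eq0 w_prim) card_units; have := m_gt0; rewrite /h; lia. Qed.

Lemma w_half : w ^+ (4 * m * h) = -1.
Proof.
have mh_gt0 : (0 < m * h)%N by rewrite muln_gt0 m_gt0.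
have : (w ^+ (4 * m * h)) ^+ 2 == 1.
  by rewrite -exprM -(prim_expr_order w_prim) card_units; apply/eqP; congr (_ ^+ _); lia.
rewrite sqrf_eq1 => /orP [/eqP|/eqP //].
by rewrite -(expr0 w) => /w_expr_inj; lia.
Qed.

Definition dir (k : nat) (b d : bool) : F := w ^+ dexp k b d.

Lemma dir_neq0 k b d : dir k b d != 0.
Proof. exact: expf_neq0 w_neq0. Qed.

Lemma dir_inj k k' b b' d d' : (k < m * h)%N -> (k' < m * h)%N ->
  dir k b d = dir k' b' d' -> [/\ k = k', b = b' & d = d'].
Proof.
move=> lt_k lt_k' /w_expr_inj; have := dexp_lt b d lt_k; have := dexp_lt b' d' lt_k'.
by move=> lt_e' lt_e /(_ _ _) /dexp_inj; apply; lia.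
Qed.

Lemma dir_neq_opp k k' b b' d d' : (k < m * h)%N -> (k' < m * h)%N ->
  dir k b d != - dir k' b' d'.
Proof.
move=> lt_k lt_k'; apply/eqP; rewrite -mulN1r -w_half -exprD => /w_expr_inj.
by have := dexp_lt b d lt_k; have := dexp_lt b' d' lt_k'; lia.
Qed.

Let g := w ^+ (p ^ 2).+1.

Lemma dirE k b d : dir k b d = w ^+ dexp k false false * (g ^+ b * w ^+ d).
Proof. by rewrite /dir /g -!exprM -!exprD /dexp; congr (_ ^+ _); case: b; case: d => /=; lia. Qed.

Lemma g_Fp2 : g ^+ (p ^ 2) = g.
Proof.
have m_gt0 := m_gt0.
rewrite /g -exprM -(prim_expr_mod w_prim) card_units.
have -> : ((p ^ 2).+1 * p ^ 2 = 1 * (8 * m * h) + (p ^ 2).+1)%N by rewrite sqr_p /h; nia.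
by rewrite modnMDl modn_small // sqr_p /h; nia.
Qed.

Lemma g_notFp : g ^+ p != g.
Proof.
have lt_p : (p < 4 * m)%N by have := p_ge3; have := sqr_p; nia.
by rewrite -exprM (eq_prim_root_expr w_prim) card_units sqr_p_succ !modn_small; nia.
Qed.

Lemma w_notFp2 : w ^+ (p ^ 2) != w.
Proof.
have m_gt0 := m_gt0.
rewrite -{2}(expr1 w) (eq_prim_root_expr w_prim) card_units sqr_p !modn_small; rewrite /h; nia.
Qed.

Lemma dir_independent k b :
  Fp_independent p (dir k b false) (dir k (~~ b) false) (dir k b true) (dir k (~~ b) true).
Proof.
have indep : Fp_independent p (dir k false false) (dir k true false)
                              (dir k false true) (dir k true true).
  rewrite !dirE /= !expr0 !expr1 !mul1r [g * 1]mulr1.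
  apply: Fp_independentZ; first by rewrite expf_neq0 ?w_neq0.
  exact: (Fp_independent_1_g_t_gt pchF g_Fp2 g_notFp w_notFp2).
by case: b => //; apply: Fp_independent_swap.
Qed.

Definition copy_vertex (k : nat) (b : bool) (i j : nat) : F :=
  torus_walk p (dir k b false) (dir k (~~ b) false) (dir k b true) (dir k (~~ b) true) i j.

Lemma copy_vertex_inj k b i j i' j' :
  (i < p ^ 2)%N -> (j < p ^ 2)%N -> (i' < p ^ 2)%N -> (j' < p ^ 2)%N ->
  copy_vertex k b i j = copy_vertex k b i' j' -> i = i' /\ j = j'.
Proof. by have := torus_walk_inj pchF (@dir_independent k b); apply. Qed.

Lemma copy_vertex_swap k b i j :
  copy_vertex k (~~ b) i j = copy_vertex k b (digit_swap p i) (digit_swap p j).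
Proof. by rewrite /copy_vertex /torus_walk negbK !(carry_walk_swap pchF). Qed.

Lemma copy_vertex_stepl k b i j :
  copy_vertex k b (i.+1 %% p ^ 2) j = copy_vertex k b i j + dir k (b (+) carry p i) false.
Proof.
rewrite /copy_vertex /torus_walk (carry_walk_mod pchF) (carry_walkS pchF) addrAC.
by case: b; case: (carry p i).
Qed.

Lemma copy_vertex_stepr k b i j :
  copy_vertex k b i (j.+1 %% p ^ 2) = copy_vertex k b i j + dir k (b (+) carry p j) true.
Proof.
rewrite /copy_vertex /torus_walk (carry_walk_mod pchF) (carry_walkS pchF) addrA.
by case: b; case: (carry p j).
Qed.

Lemma copy_vertex_pair_inj k b :
  injective (fun v : 'I_(p ^ 2) * 'I_(p ^ 2) => copy_vertex k b v.1 v.2).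
Proof.
move=> [i j] [i' j'] /= /copy_vertex_inj.
by case=> [|||| /val_inj -> /val_inj ->] //=.
Qed.

Lemma copy_vertex_onto k b x :
  exists i j, [/\ (i < p ^ 2)%N, (j < p ^ 2)%N & x = copy_vertex k b i j].
Proof.
have card_le : (#|F| <= #|{: 'I_(p ^ 2) * 'I_(p ^ 2)}|)%N.
  by rewrite card_prod !card_ord cardF -expnD.
have /codomP [[i j] ->] := inj_card_onto (@copy_vertex_pair_inj k b) card_le x.
by exists i, j.
Qed.

Definition ordF (x : F) : 'I_(p ^ 4) := cast_ord cardF (enum_rank x).

Lemma ordF_inj : injective ordF.
Proof. by move=> x y /cast_ord_inj /enum_rank_inj. Qed.

Lemma ordF_onto (a : 'I_(p ^ 4)) : exists x, a = ordF x.
Proof. by exists (enum_val (cast_ord (esym cardF) a)); rewrite /ordF enum_valK cast_ordKV. Qed.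

Definition edge (x z : F) : {set 'I_(p ^ 4)} := [set ordF x; ordF (x + z)].

Lemma ordF_edge_neq x z : z != 0 -> ordF x != ordF (x + z).
Proof. by move=> z_neq0; rewrite (inj_eq ordF_inj) -subr_eq0 opprD addrA subrr sub0r oppr_eq0. Qed.

Lemma edge_Kedges x z : z != 0 -> edge x z \in Kedges (p ^ 4).
Proof. by move=> z_neq0; rewrite inE cards2 ordF_edge_neq. Qed.

Lemma edge_eq x z x' z' : z != 0 -> edge x z = edge x' z' -> (x = x' /\ z = z') \/ z = - z'.
Proof.
move=> z_neq0 /set2_eq []; first exact: ordF_edge_neq.
  by move=> [/ordF_inj eq_x /ordF_inj]; rewrite eq_x => /addrI; left.
move=> [/ordF_inj -> /ordF_inj /eqP]; rewrite -addrA -{2}[x']addr0 (inj_eq (addrI x')).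
by rewrite addrC addr_eq0 => /eqP; right.
Qed.

Local Notation torus_adj := (cart_adj (cycle_adj (p ^ 2)) (cycle_adj (p ^ 2))).

Definition copy (k : nat) (b : bool) : {set {set 'I_(p ^ 4)}} :=
  image_edges torus_adj (fun v => ordF (copy_vertex k b v.1 v.2)).

Lemma mem_copy k b S : S \in copy k b <-> exists i j (d : bool),
  [/\ (i < p ^ 2)%N, (j < p ^ 2)%N &
      S = edge (copy_vertex k b i j) (dir k (b (+) carry p (if d then j else i)) d)].
Proof.
split.
  case/imsetP=> [[[i j] [i' j']]]; rewrite inE /cart_adj /cycle_adj /= => adj_ij ->.
  case/orP: adj_ij => /andP [].
  - case/orP=> /eqP step /eqP same; rewrite /edge -same.
      by exists i, j, false; rewrite step copy_vertex_stepl.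
    by exists i', j, false; rewrite step copy_vertex_stepl setUC.
  - move=> /eqP same /orP [] /eqP step; rewrite /edge -same.
      by exists i, j, true; rewrite step copy_vertex_stepr.
    by exists i, j', true; rewrite step copy_vertex_stepr setUC.
move=> [i [j [d [lt_i lt_j ->]]]]; apply/imsetP.
have lt_step n : (n.+1 %% p ^ 2 < p ^ 2)%N by rewrite ltn_pmod ?p2_gt0.
case: d.
  exists ((Ordinal lt_i, Ordinal lt_j), (Ordinal lt_i, Ordinal (lt_step j))).
    by rewrite inE /cart_adj /cycle_adj /= !eqxx orbT.
  by rewrite /edge /= copy_vertex_stepr.
exists ((Ordinal lt_i, Ordinal lt_j), (Ordinal (lt_step i), Ordinal lt_j)).
  by rewrite inE /cart_adj /cycle_adj /= !eqxx.
by rewrite /edge /= copy_vertex_stepl.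
Qed.

Lemma copy_disjoint k k' b b' S : (k < m * h)%N -> (k' < m * h)%N ->
  S \in copy k b -> S \in copy k' b' -> k = k' /\ b = b'.
Proof.
move=> lt_k lt_k' /mem_copy [i [j [d [lt_i lt_j ->]]]] /mem_copy [i' [j' [d' [lt_i' lt_j']]]].
case/edge_eq=> [|[eq_x /(dir_inj lt_k lt_k') [eq_k eq_bit eq_d]] | opp].
- exact: dir_neq0.
- subst k' d'; split=> //; case: (eqVneq b b') => [// | ne_b].
  have {ne_b} eq_b' : b' = ~~ b by apply/esym/addbP; rewrite -negb_eqb.
  subst b'; have lt_swap := digit_swap_lt (prime_gt0 p_prime).
  move: eq_x eq_bit; rewrite copy_vertex_swap.
  case/copy_vertex_inj=> // -> ->.
  by case: d; rewrite /= !carry_digit_swap; case: b; case: (carry _ _).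
- by move/eqP: opp; rewrite (negbTE (dir_neq_opp _ _ _ _ lt_k lt_k')).
Qed.

Lemma edge_in_copy x n : (n < 4 * m * h)%N ->
  exists k b, (k < m * h)%N /\ edge x (w ^+ n) \in copy k b.
Proof.
case/dexp_onto=> k [beta [d [lt_k ->]]].
have [i [j [lt_i lt_j ->]]] := copy_vertex_onto k false x.
move def_c : (carry p (if d then j else i)) => c.
exists k, (beta (+) c); split=> //; apply/mem_copy.
have [eq_c | ne_c] := eqVneq beta c.
  by exists i, j, d; rewrite def_c eq_c addbb.
have {ne_c} <- : ~~ c = beta by apply/addbP; rewrite -negb_eqb eq_sym.
have lt_swap := digit_swap_lt (prime_gt0 p_prime).
have carry_swap : carry p (if d then digit_swap p j else digit_swap p i) = c.
  by rewrite -def_c; case: (d); rewrite carry_digit_swap.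
exists (digit_swap p i), (digit_swap p j), d; split=> //.
by rewrite addNb addbb -copy_vertex_swap carry_swap.
Qed.

Lemma w_sign_onto z : z != 0 -> exists2 n, (n < 4 * m * h)%N & z = w ^+ n \/ z = - w ^+ n.
Proof.
move=> z_neq0; have [n ->] := prim_rootP w_prim (expf_card_pred z_neq0).
have lt_n : (n < 8 * m * h)%N by rewrite -card_units.
case: (ltnP n (4 * m * h)) => [lt_half | ge_half]; first by exists n; [| left].
exists (n - 4 * m * h)%N; first by lia.
by right; rewrite -{1}(subnKC ge_half) exprD w_half mulN1r.
Qed.

Lemma copy_cover S : S \in Kedges (p ^ 4) -> exists k b, (k < m * h)%N /\ S \in copy k b.
Proof.
rewrite inE => /cards2P [a [a' [+ ->]]].
have [x ->] := ordF_onto a; have [x' ->] := ordF_onto a' => ne_a.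
have z_neq0 : x' - x != 0 by rewrite subr_eq0 eq_sym -(inj_eq ordF_inj).
have [n lt_n [z_pos | z_neg]] := w_sign_onto z_neq0.
  have [k [b [lt_k S_kb]]] := edge_in_copy x lt_n.
  by exists k, b; rewrite /edge -z_pos addrC subrK in S_kb.
have w_n : w ^+ n = x - x' by rewrite -opprB z_neg opprK.
have [k [b [lt_k S_kb]]] := edge_in_copy x' lt_n.
by exists k, b; rewrite setUC; rewrite /edge w_n addrC subrK in S_kb.
Qed.

Lemma torus_copies_decompose : decomposes_into (p ^ 4) ((p ^ 4 - 1) %/ 4) torus_adj.
Proof.
have -> : ((p ^ 4 - 1) %/ 4 = (m * h).*2)%N.
  by rewrite p4_sub1 (_ : 8 * m * h = (m * h).*2 * 4)%N ?mulnK //; rewrite -mul2n; lia.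
exists (fun c : 'I_(m * h).*2 => copy c./2 (odd c)); split.
- move=> c; exists (fun v : 'I_(p ^ 2) * 'I_(p ^ 2) => ordF (copy_vertex c./2 (odd c) v.1 v.2)).
  split=> //.
  by move=> v v' /ordF_inj /copy_vertex_pair_inj.
- move=> c c' ne_c; rewrite disjoint_subset; apply/subsetP => S S_c; rewrite inE.
  apply: contra ne_c => S_c'.
  have lt_half (c0 : 'I_(m * h).*2) : (c0./2 < m * h)%N by rewrite ltn_half_double.
  have [eq_half eq_odd] := copy_disjoint (lt_half c) (lt_half c') S_c S_c'.
  by apply/eqP/val_inj; rewrite /= -[val c]odd_double_half -[val c']odd_double_half eq_half eq_odd.
- apply/setP => S; apply/bigcupP/idP => [[c _ /mem_copy [i [j [d [_ _ ->]]]]] | ].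
    exact/edge_Kedges/dir_neq0.
  case/copy_cover=> k [b [lt_k S_kb]].
  have lt_c : (b + k.*2 < (m * h).*2)%N by rewrite -ltn_half_double half_bit_double.
  by exists (Ordinal lt_c); rewrite //= half_bit_double oddD odd_double addbF oddb.
Qed.

End Field.

End Construction.

Theorem theorem2 (p : nat) (hp : prime p) (hodd : odd p) :
  decomposes_into (p ^ 4) ((p ^ 4 - 1) %/ 4)
    (cart_adj (cycle_adj (p ^ 2)) (cycle_adj (p ^ 2))).
Proof.
have [F pchF cardF] := pPrimePowerField hp (isT : (0 < 4)%N).
have [w w_prim] := finField_prim_root F.
exact: (torus_copies_decompose hp hodd pchF cardF w_prim).
Qed.
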